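(* Let $1<a_1<a_2$ be coprime integers, $S=\langle a_1,a_2\rangle$, and let $t\in(1,\infty)$. If $r_0(t)$ is irrational, then $\Delta_t(S)$ is dense in $[0,|a_1a_2P(t)|]$, i.e. $[0,|a_1a_2P(t)|]$ is contained in the closure of $\Delta_t(S)$.
   Context: $S=\{\lambda_1a_1+\lambda_2a_2:\lambda_1,\lambda_2\in\mathbb{N}_0\}$. For $t\in[1,\infty)$ and $(u,v)\in\mathbb{R}^2$, $\|(u,v)\|_t=(|u|^t+|v|^t)^{1/t}$. For $x\in S$, $Z(x)=\{(m,n)\in\mathbb{N}_0^2: ma_1+na_2=x\}$, $\mathscr{L}_t(x)=\{\|f\|_t: f\in Z(x)\}$, $\Delta_t(x)$ is the set of differences between consecutive elements of $\mathscr{L}_t(x)$ (in increasing order), and $\Delta_t(S)=\bigcup_{x\in S}\Delta_t(x)$. Define $\mu_t(r)=\left\|\left(\frac{1-r}{a_1},\frac{r}{a_2}\right)\right\|_t$ for $r\in[0,1]$, $r_0(t)=\min\{r\in[0,1]:\mu_t(r)=\frac{1}{a_2}\}$, and $P(t)=\mu_t'(r_0(t))$ (derivative in $r$). *)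

From Stdlib Require Import Reals Lra Lia Arith.
From Coquelicot Require Import Coquelicot.
Open Scope R_scope.

(* |x|^t for real t >= 1, with the convention 0^t = 0 (Stdlib's Rpower 0 t = 1). *)
Definition rpow (x t : R) : R :=
  if Req_EM_T x 0 then 0 else Rpower (Rabs x) t.

Definition tnorm (t u v : R) : R :=
  rpow (rpow u t + rpow v t) (1 / t).

Definition in_S (a1 a2 x : nat) : Prop :=
  exists m n : nat, (m * a1 + n * a2)%nat = x.

Definition in_Z (a1 a2 x m n : nat) : Prop := (m * a1 + n * a2)%nat = x.

Definition in_L (a1 a2 : nat) (t : R) (x : nat) (l : R) : Prop :=
  exists m n : nat, in_Z a1 a2 x m n /\ l = tnorm t (INR m) (INR n).

Definition in_Delta (a1 a2 : nat) (t : R) (x : nat) (d : R) : Prop :=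
  exists l1 l2 : R,
    in_L a1 a2 t x l1 /\ in_L a1 a2 t x l2 /\ l1 < l2 /\
    (forall l, in_L a1 a2 t x l -> ~ (l1 < l /\ l < l2)) /\
    d = l2 - l1.

Definition in_DeltaS (a1 a2 : nat) (t : R) (d : R) : Prop :=
  exists x : nat, in_S a1 a2 x /\ in_Delta a1 a2 t x d.

Definition mu (a1 a2 : nat) (t r : R) : R :=
  tnorm t ((1 - r) / INR a1) (r / INR a2).

Definition is_r0 (a1 a2 : nat) (t r0 : R) : Prop :=
  0 <= r0 <= 1 /\ mu a1 a2 t r0 = 1 / INR a2 /\
  (forall r, 0 <= r <= 1 -> mu a1 a2 t r = 1 / INR a2 -> r0 <= r).

Definition irrational (x : R) : Prop :=
  ~ (exists p q : Z, q <> 0%Z /\ x = IZR p / IZR q).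

(* For [N] with [a1 <= N r0], the factorizations of [N a2] are the [(k a2, N - k a1)], of
   length [N a2 mu_t(1 - a1 k / N)].  Since [mu_t^t] is strictly convex and
   [mu_t(r0) = mu_t(1)], [mu_t] decreases on [[0, r0]] and stays below [mu_t(r0)] on [[r0, 1]].
   Hence the length of [(0, N)] and the length at the first grid point to the left of [r0] are
   consecutive, and their difference is [N a2 (mu_t(r0 - a1 th_N / N) - mu_t(r0))], which is
   close to [- a1 a2 P th_N] with [th_N = up(x_N) - x_N], [x_N = N (1 - r0) / a1].  As [r0] is
   irrational, Dirichlet's approximation theorem makes the [th_N] dense in [[0, 1]] along every
   tail, and [P <= 0] because [mu_t] decreases to the left of [r0]. *)

From Stdlib Require Import Reals Lra Lia ZArith Classical FinFun.
From Coquelicot Require Import Coquelicot.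
Open Scope R_scope.

Lemma Rpower_gt0 x p : 0 < Rpower x p.
Proof. apply exp_pos. Qed.

Lemma rpow_Rpower x p : 0 < x -> rpow x p = Rpower x p.
Proof.
  intros Hx. unfold rpow. destruct (Req_EM_T x 0); [lra|].
  rewrite Rabs_pos_eq; lra.
Qed.

Lemma rpow_0 p : rpow 0 p = 0.
Proof. unfold rpow. destruct (Req_EM_T 0 0); lra. Qed.

Lemma rpow_ge0 x p : 0 <= rpow x p.
Proof. unfold rpow. destruct (Req_EM_T x 0); [lra|]. left; apply Rpower_gt0. Qed.

Lemma rpow_lt p x y : 0 < p -> 0 <= x < y -> rpow x p < rpow y p.
Proof.
  intros Hp [[Hx|<-] Hxy]; rewrite (rpow_Rpower y) by lra.
  - rewrite rpow_Rpower by lra. apply Rlt_Rpower_l; lra.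
  - rewrite rpow_0. apply Rpower_gt0.
Qed.

Lemma rpow_le p x y : 0 < p -> 0 <= x <= y -> rpow x p <= rpow y p.
Proof.
  intros Hp [Hx [Hxy|<-]]; [left; apply rpow_lt|]; lra.
Qed.

Lemma rpow_inj p x y : 0 < p -> 0 <= x -> 0 <= y -> rpow x p = rpow y p -> x = y.
Proof.
  intros Hp Hx Hy E.
  destruct (Rtotal_order x y) as [Hlt|[Heq|Hlt]]; auto.
  - pose proof (rpow_lt p x y Hp (conj Hx Hlt)); lra.
  - pose proof (rpow_lt p y x Hp (conj Hy Hlt)); lra.
Qed.

Lemma rpow_rpow_inv p x : 0 < p -> 0 <= x -> rpow (rpow x p) (1 / p) = x.
Proof.
  intros Hp [Hx|<-].
  - rewrite (rpow_Rpower x), rpow_Rpower, Rpower_mult by (apply Rpower_gt0 || lra).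
    replace (p * (1 / p)) with 1 by (field; lra).
    apply Rpower_1; lra.
  - now rewrite !rpow_0.
Qed.

Lemma rpow_mul c x p : 0 < c -> 0 <= x -> rpow (c * x) p = Rpower c p * rpow x p.
Proof.
  intros Hc [Hx|<-].
  - rewrite !rpow_Rpower by nra. symmetry; apply Rpower_mult_distr; lra.
  - rewrite Rmult_0_r, !rpow_0. ring.
Qed.

Lemma tnorm_scal t c u v : 0 < t -> 0 < c -> 0 <= u -> 0 <= v ->
  tnorm t (c * u) (c * v) = c * tnorm t u v.
Proof.
  intros Ht Hc Hu Hv. unfold tnorm.
  rewrite !rpow_mul, <- Rmult_plus_distr_l, rpow_mul, Rpower_mult by
    (auto || apply Rpower_gt0 || (pose proof (rpow_ge0 u t); pose proof (rpow_ge0 v t); lra)).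
  replace (t * (1 / t)) with 1 by (field; lra).
  now rewrite Rpower_1.
Qed.

Lemma rpow_le_abs p y : 1 <= p -> Rabs y <= 1 -> rpow y p <= Rabs y.
Proof.
  intros Hp Hy. unfold rpow. destruct (Req_EM_T y 0) as [_|Hy0]; [apply Rabs_pos|].
  apply Rabs_pos_lt in Hy0.
  unfold Rpower. rewrite <- (exp_ln (Rabs y)) at 2 by auto.
  assert (ln (Rabs y) <= 0) by (rewrite <- ln_1; apply ln_le; lra).
  destruct (Rle_lt_or_eq_dec (p * ln (Rabs y)) (ln (Rabs y))) as [Hlt| ->]; [nra| |lra].
  left. now apply exp_increasing.
Qed.

Lemma rpow_derive p x : 0 < x ->
  derivable_pt_lim (fun y => rpow y p) x (p * Rpower x (p - 1)).
Proof.
  intros Hx. apply is_derive_Reals.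
  apply is_derive_ext_loc with (f := fun y => Rpower y p).
  - apply locally_open with (D := fun y => 0 < y); [apply open_gt| |auto].
    intros y Hy. symmetry. now apply rpow_Rpower.
  - apply is_derive_Reals, derivable_pt_lim_power; auto.
Qed.

Lemma rpow_continuous p x : 1 <= p -> 0 <= x -> continuity_pt (fun y => rpow y p) x.
Proof.
  intros Hp [Hx|<-].
  - apply derivable_continuous_pt. eexists. now apply rpow_derive.
  - intros eps Heps. exists (Rmin 1 eps). split; [apply Rmin_pos; lra|].
    intros y [_ Hy]. simpl in *. unfold R_dist in *.
    rewrite rpow_0, Rminus_0_r in *. rewrite Rabs_pos_eq by apply rpow_ge0.
    pose proof (Rmin_l 1 eps); pose proof (Rmin_r 1 eps).
    pose proof (rpow_le_abs p y Hp ltac:(lra)). lra.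
Qed.

Lemma MVT_open f df a b : a < b ->
  (forall x, a < x < b -> derivable_pt_lim f x (df x)) ->
  (forall x, a <= x <= b -> continuity_pt f x) ->
  exists c, a < c < b /\ f b - f a = df c * (b - a).
Proof.
  intros Hab Hd Hc.
  assert (pr1 : forall c, a < c < b -> derivable_pt f c)
    by (intros c Hc'; exists (df c); now apply Hd).
  assert (pr2 : forall c, a < c < b -> derivable_pt id c) by (intros; apply derivable_pt_id).
  destruct (MVT f id a b pr1 pr2 Hab Hc) as [c [Hcab Hm]].
  - intros; apply derivable_continuous_pt, derivable_pt_id.
  - exists c. split; auto.
    rewrite (derive_pt_eq_0 f c (df c) (pr1 c Hcab) (Hd c Hcab)),
      (derive_pt_eq_0 id c 1 (pr2 c Hcab) (derivable_pt_lim_id c)) in Hm.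
    unfold id in Hm. lra.
Qed.

Section StrictlyConvex.

Variables (h dh : R -> R) (a b r0 : R).
Hypothesis r0_in : a < r0 < b.
Hypothesis h_derive : forall x, a < x < b -> derivable_pt_lim h x (dh x).
Hypothesis h_continuous : forall x, a <= x <= b -> continuity_pt h x.
Hypothesis dh_increasing : forall x y, a < x < y -> y < b -> dh x < dh y.
Hypothesis h_r0_b : h r0 = h b.

Let mvt x y : a <= x < y -> y <= b -> exists c, x < c < y /\ h y - h x = dh c * (y - x).
Proof. intros. apply MVT_open; intros; [lra|apply h_derive|apply h_continuous]; lra. Qed.

Lemma convex_le_between r : r0 <= r <= b -> h r <= h r0.
Proof.
  intros Hr.
  destruct (Req_dec r r0) as [->|Hr0]; [lra|].
  destruct (Req_dec r b) as [->|Hb]; [lra|].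
  destruct (mvt r0 r) as [x1 [Hx1 E1]]; try lra.
  destruct (mvt r b) as [x2 [Hx2 E2]]; try lra.
  assert (dh x1 < dh x2) by (apply dh_increasing; lra).
  destruct (Rle_lt_dec (h r) (h r0)) as [|Hgt]; auto.
  assert (0 < dh x1) by (destruct (Rle_lt_dec (dh x1) 0); nra).
  assert (dh x2 < 0) by (destruct (Rle_lt_dec 0 (dh x2)); nra).
  lra.
Qed.

Lemma convex_decreasing_before x y : a <= x < y -> y <= r0 -> h y < h x.
Proof.
  intros Hxy Hy.
  destruct (mvt r0 b) as [c [Hc Ec]]; try lra.
  assert (dh c = 0) by (rewrite h_r0_b in Ec; nra).
  destruct (mvt x y) as [z [Hz Ez]]; try lra.
  assert (dh z < dh c) by (apply dh_increasing; lra).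
  nra.
Qed.

End StrictlyConvex.

Definition mu_pow (A B t r : R) : R := rpow ((1 - r) / A) t + rpow (r / B) t.
Definition dmu_pow (A B t r : R) : R :=
  - (t / A) * rpow ((1 - r) / A) (t - 1) + (t / B) * rpow (r / B) (t - 1).

Lemma mu_rpow a1 a2 t r : mu a1 a2 t r = rpow (mu_pow (INR a1) (INR a2) t r) (1 / t).
Proof. reflexivity. Qed.

Lemma mu_pow_ge0 A B t r : 0 <= mu_pow A B t r.
Proof.
  unfold mu_pow. pose proof (rpow_ge0 ((1 - r) / A) t); pose proof (rpow_ge0 (r / B) t); lra.
Qed.

Lemma mu_pow_derive A B t r : 0 < A -> 0 < B -> 0 < r < 1 ->
  derivable_pt_lim (mu_pow A B t) r (dmu_pow A B t r).
Proof.
  intros HA HB Hr. apply is_derive_Reals.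
  assert (H1 : is_derive (fun r => rpow ((1 - r) / A) t) r
                 (scal (- (1 / A)) (t * Rpower ((1 - r) / A) (t - 1)))).
  { apply (is_derive_comp (fun y => rpow y t) (fun r => (1 - r) / A)).
    - apply is_derive_Reals, rpow_derive, Rdiv_lt_0_compat; lra.
    - auto_derive; [lra|field; lra]. }
  assert (H2 : is_derive (fun r => rpow (r / B) t) r
                 (scal (1 / B) (t * Rpower (r / B) (t - 1)))).
  { apply (is_derive_comp (fun y => rpow y t) (fun r => r / B)).
    - apply is_derive_Reals, rpow_derive, Rdiv_lt_0_compat; lra.
    - auto_derive; [lra|field; lra]. }
  unfold dmu_pow. rewrite !rpow_Rpower by (apply Rdiv_lt_0_compat; lra).
  eapply is_derive_ext; [intros; reflexivity|].
  replace (- (t / A) * Rpower ((1 - r) / A) (t - 1) + t / B * Rpower (r / B) (t - 1))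
    with (plus (scal (- (1 / A)) (t * Rpower ((1 - r) / A) (t - 1)))
               (scal (1 / B) (t * Rpower (r / B) (t - 1)))).
  - exact (is_derive_plus _ _ _ _ _ H1 H2).
  - unfold plus, scal; simpl. unfold mult; simpl. field. lra.
Qed.

Lemma mu_pow_continuous A B t r : 0 < A -> 0 < B -> 1 <= t -> 0 <= r <= 1 ->
  continuity_pt (mu_pow A B t) r.
Proof.
  intros HA HB Ht Hr.
  apply (continuity_pt_plus (fun r => rpow ((1 - r) / A) t) (fun r => rpow (r / B) t)).
  - apply (continuity_pt_comp (fun r => (1 - r) / A) (fun y => rpow y t)); [reg; lra|].
    apply rpow_continuous, Rdiv_le_0_compat; lra.
  - apply (continuity_pt_comp (fun r => r / B) (fun y => rpow y t)); [reg; lra|].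
    apply rpow_continuous, Rdiv_le_0_compat; lra.
Qed.

Lemma dmu_pow_increasing A B t x y : 0 < A -> 0 < B -> 1 < t -> 0 <= x < y -> y <= 1 ->
  dmu_pow A B t x < dmu_pow A B t y.
Proof.
  intros HA HB Ht Hxy Hy. unfold dmu_pow.
  assert (rpow ((1 - y) / A) (t - 1) < rpow ((1 - x) / A) (t - 1)).
  { apply rpow_lt; [lra|]. split; [apply Rdiv_le_0_compat; lra|].
    apply Rmult_lt_compat_r; [apply Rinv_0_lt_compat|]; lra. }
  assert (rpow (x / B) (t - 1) < rpow (y / B) (t - 1)).
  { apply rpow_lt; [lra|]. split; [apply Rdiv_le_0_compat; lra|].
    apply Rmult_lt_compat_r; [apply Rinv_0_lt_compat|]; lra. }
  assert (0 < t / A) by (apply Rdiv_lt_0_compat; lra).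
  assert (0 < t / B) by (apply Rdiv_lt_0_compat; lra).
  nra.
Qed.

Lemma INR_eventually_gt x : exists N0 : nat, forall N, (N0 <= N)%nat -> x < INR N.
Proof.
  destruct (INR_unbounded x) as [N0 HN0]. exists N0.
  intros N HN. apply le_INR in HN. lra.
Qed.

Lemma derivable_pt_lim_scaled_increment f x l C : derivable_pt_lim f x l -> 0 < C ->
  forall eps, 0 < eps -> exists N0 : nat, forall (N : nat) th, (N0 <= N)%nat -> 0 <= th <= 1 ->
  Rabs (INR N * (f (x - C * th / INR N) - f x) + C * th * l) <= eps.
Proof.
  intros Hd HC eps Heps.
  destruct (Hd (eps / C)) as [del Hdel]; [apply Rdiv_lt_0_compat; lra|].
  pose proof (cond_pos del) as Hdel0.
  destruct (INR_eventually_gt (Rmax 0 (C / del))) as [N0 HN0]. exists N0.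
  intros N th HN [[Hth| <-] Hth1]; specialize (HN0 N HN);
    pose proof (Rmax_l 0 (C / del)); pose proof (Rmax_r 0 (C / del)).
  - set (h := - (C * th / INR N)).
    assert (Hh : 0 < C * th / INR N <= C / INR N).
    { split; [apply Rdiv_lt_0_compat; nra|].
      apply Rmult_le_compat_r; [left; apply Rinv_0_lt_compat|]; nra. }
    assert (C / INR N < del).
    { apply (Rmult_lt_reg_r (INR N)); [lra|].
      replace (C / INR N * INR N) with C by (field; lra).
      assert (C / del * del = C) by (field; lra). nra. }
    specialize (Hdel h ltac:(unfold h; lra) ltac:(unfold h; rewrite Rabs_Ropp, Rabs_pos_eq; lra)).
    replace (x - C * th / INR N) with (x + h) by (unfold h; ring).
    replace (INR N * (f (x + h) - f x) + C * th * l)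
      with (- (C * th) * ((f (x + h) - f x) / h - l)) by (unfold h; field; split; nra).
    rewrite Rabs_mult, Rabs_Ropp, Rabs_pos_eq by nra.
    assert (C * Rabs ((f (x + h) - f x) / h - l) <= eps).
    { apply (Rmult_le_reg_r (/ C)); [now apply Rinv_0_lt_compat|].
      replace (C * Rabs ((f (x + h) - f x) / h - l) * / C)
        with (Rabs ((f (x + h) - f x) / h - l)) by (field; lra).
      unfold Rdiv in Hdel. lra. }
    pose proof (Rabs_pos ((f (x + h) - f x) / h - l)). nra.
  - replace (x - C * 0 / INR N) with x by (field; lra).
    rewrite Rminus_diag, Rmult_0_r, Rmult_0_r, Rmult_0_l, Rplus_0_l, Rabs_R0. lra.
Qed.

Lemma derivable_pt_lim_nonpos_of_left f x l d : derivable_pt_lim f x l -> 0 < d ->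
  (forall h, 0 < h < d -> f x <= f (x - h)) -> l <= 0.
Proof.
  intros Hd Hd0 Hleft.
  destruct (Rle_lt_dec l 0) as [|Hl]; auto.
  destruct (Hd l Hl) as [del Hdel]. pose proof (cond_pos del).
  set (h := Rmin del d / 2).
  assert (Hh : 0 < h < Rmin del d).
  { pose proof (Rmin_pos del d (cond_pos del) Hd0). unfold h. lra. }
  pose proof (Rmin_l del d); pose proof (Rmin_r del d).
  specialize (Hdel (- h) ltac:(lra) ltac:(rewrite Rabs_Ropp, Rabs_pos_eq; lra)).
  specialize (Hleft h ltac:(lra)). change (f x <= f (x + - h)) in Hleft.
  assert ((f (x + - h) - f x) / - h <= 0).
  { replace ((f (x + - h) - f x) / - h) with ((f x - f (x + - h)) / h) by (field; lra).
    apply Rmult_le_0_r; [lra|]. left; now apply Rinv_0_lt_compat. }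
  apply Rabs_def2 in Hdel. lra.
Qed.

Section MuShape.

Variables (a1 a2 : nat) (t r0 : R).
Hypothesis a1_gt0 : (0 < a1)%nat.
Hypothesis a2_gt0 : (0 < a2)%nat.
Hypothesis t_gt1 : 1 < t.
Hypothesis r0_in : 0 < r0 < 1.
Hypothesis mu_r0 : mu a1 a2 t r0 = 1 / INR a2.

Local Notation A := (INR a1).
Local Notation B := (INR a2).

Let A_gt0 : 0 < A. Proof. now apply lt_0_INR. Qed.
Let B_gt0 : 0 < B. Proof. now apply lt_0_INR. Qed.

Lemma mu_1 : mu a1 a2 t 1 = 1 / B.
Proof.
  unfold mu, tnorm. replace ((1 - 1) / A) with 0 by (field; lra).
  rewrite rpow_0, Rplus_0_l. apply rpow_rpow_inv; [lra|].
  apply Rlt_le, Rdiv_lt_0_compat; lra.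
Qed.

Let mu_pow_r0_1 : mu_pow A B t r0 = mu_pow A B t 1.
Proof.
  apply (rpow_inj (1 / t)); try apply mu_pow_ge0.
  - apply Rdiv_lt_0_compat; lra.
  - now rewrite <- !mu_rpow, mu_1, mu_r0.
Qed.

Lemma mu_le_mu_r0 r : r0 <= r <= 1 -> mu a1 a2 t r <= mu a1 a2 t r0.
Proof.
  intros Hr. rewrite !mu_rpow. apply rpow_le; [apply Rdiv_lt_0_compat; lra|].
  split; [apply mu_pow_ge0|]. apply (convex_le_between _ (dmu_pow A B t) 0 1); auto; intros;
    [apply mu_pow_derive|apply mu_pow_continuous|apply dmu_pow_increasing]; auto; lra.
Qed.

Lemma mu_decreasing x y : 0 <= x < y -> y <= r0 -> mu a1 a2 t y < mu a1 a2 t x.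
Proof.
  intros Hxy Hy. rewrite !mu_rpow. apply rpow_lt; [apply Rdiv_lt_0_compat; lra|].
  split; [apply mu_pow_ge0|].
  apply (convex_decreasing_before _ (dmu_pow A B t) 0 1 r0); auto; intros;
    [apply mu_pow_derive|apply mu_pow_continuous|apply dmu_pow_increasing]; auto; lra.
Qed.

Lemma mu_nonincreasing x y : 0 <= x <= y -> y <= r0 -> mu a1 a2 t y <= mu a1 a2 t x.
Proof.
  intros [Hx [Hxy| <-]] Hy; [left; apply mu_decreasing|]; lra.
Qed.

Lemma mu_derive_r0_nonpos P : derivable_pt_lim (mu a1 a2 t) r0 P -> P <= 0.
Proof.
  intros Hder. apply (derivable_pt_lim_nonpos_of_left _ r0 P r0 Hder); [lra|].
  intros h Hh. left. apply mu_decreasing; lra.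
Qed.

End MuShape.

Lemma factorization_of_multiple a1 a2 N m n : (0 < a2)%nat -> Nat.gcd a1 a2 = 1%nat ->
  in_Z a1 a2 (N * a2) m n ->
  exists k, (k * a1 <= N)%nat /\ m = (k * a2)%nat /\ n = (N - k * a1)%nat.
Proof.
  unfold in_Z. intros Ha2 Hg E.
  assert (Hn : (n <= N)%nat) by nia.
  assert (Hd : Nat.divide a2 (a1 * m)) by (exists (N - n)%nat; nia).
  apply Nat.gauss in Hd; [|now rewrite Nat.gcd_comm].
  destruct Hd as [k ->]. exists k.
  assert ((k * a1 + n) * a2 = N * a2)%nat as Hk by lia.
  apply Nat.mul_cancel_r in Hk; lia.
Qed.

Lemma tnorm_factorization_of_multiple a1 a2 t N k :
  0 < t -> (0 < a1)%nat -> (0 < a2)%nat -> (0 < N)%nat -> (k * a1 <= N)%nat ->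
  tnorm t (INR (k * a2)) (INR (N - k * a1)) =
  INR N * INR a2 * mu a1 a2 t (1 - INR a1 * INR k / INR N).
Proof.
  intros Ht H1 H2 HN Hk.
  apply lt_0_INR in H1, H2, HN. pose proof (le_INR _ _ Hk) as Hk'. rewrite mult_INR in Hk'.
  assert (0 <= INR a1 * INR k / INR N) by
    (apply Rdiv_le_0_compat; [apply Rmult_le_pos; apply pos_INR|lra]).
  unfold mu. rewrite <- tnorm_scal.
  - f_equal.
    + rewrite mult_INR. field. lra.
    + rewrite minus_INR, mult_INR by lia. field. lra.
  - lra.
  - nra.
  - apply Rdiv_le_0_compat; lra.
  - apply Rdiv_le_0_compat; [|lra].
    apply Rmult_le_reg_r with (INR N); [lra|]. field_simplify; lra.
Qed.

Definition up_gap (x : R) : R := IZR (up x) - x.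

Lemma up_gap_bounds x : 0 < up_gap x <= 1.
Proof. unfold up_gap. destruct (archimed x). lra. Qed.

Section ConsecutiveLengths.

Variables (a1 a2 : nat) (t r0 : R).
Hypothesis a1_gt0 : (0 < a1)%nat.
Hypothesis a2_gt0 : (0 < a2)%nat.
Hypothesis coprime_a1_a2 : Nat.gcd a1 a2 = 1%nat.
Hypothesis t_gt1 : 1 < t.
Hypothesis r0_in : 0 < r0 < 1.
Hypothesis mu_r0 : mu a1 a2 t r0 = 1 / INR a2.

Local Notation A := (INR a1).
Local Notation B := (INR a2).

Let A_gt0 : 0 < A. Proof. now apply lt_0_INR. Qed.
Let B_gt0 : 0 < B. Proof. now apply lt_0_INR. Qed.

Lemma in_L_multiple N l : (0 < N)%nat ->
  in_L a1 a2 t (N * a2) l <->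
  exists k, (k * a1 <= N)%nat /\ l = INR N * B * mu a1 a2 t (1 - A * INR k / INR N).
Proof.
  intros HN. split.
  - intros [m [n [Hz ->]]].
    destruct (factorization_of_multiple a1 a2 N m n a2_gt0 coprime_a1_a2 Hz)
      as [k [Hk [-> ->]]].
    exists k. split; auto. apply tnorm_factorization_of_multiple; auto; lra.
  - intros [k [Hk ->]]. exists (k * a2)%nat, (N - k * a1)%nat. split.
    + unfold in_Z. nia.
    + symmetry. apply tnorm_factorization_of_multiple; auto; lra.
Qed.

(* [1 - a1 k / N] lies to the right of [r0] exactly when [k <= N (1 - r0) / a1]. *)
Lemma mu_grid_dichotomy N K k : (0 < N)%nat ->
  INR K - 1 <= INR N * ((1 - r0) / A) < INR K -> (k * a1 <= N)%nat ->
  mu a1 a2 t (1 - A * INR k / INR N) <= mu a1 a2 t r0 \/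
  mu a1 a2 t (1 - A * INR K / INR N) <= mu a1 a2 t (1 - A * INR k / INR N).
Proof.
  intros HN [HK1 HK2] Hk.
  apply lt_0_INR in HN. apply le_INR in Hk. rewrite mult_INR in Hk.
  assert (Hgrid : forall x, 1 - A * x / INR N = r0 + A / INR N * (INR N * ((1 - r0) / A) - x))
    by (intros; field; lra).
  assert (0 < A / INR N) by (apply Rdiv_lt_0_compat; lra).
  assert (Hk0 : 0 <= A * INR k / INR N <= 1).
  { split; [apply Rdiv_le_0_compat; [apply Rmult_le_pos; [lra|apply pos_INR]|lra]|].
    apply Rmult_le_reg_r with (INR N); [lra|]. field_simplify; lra. }
  destruct (Nat.lt_ge_cases k K) as [Hlt|Hge].
  - left. apply mu_le_mu_r0; auto. split; [|lra].
    apply le_INR in Hlt. rewrite S_INR in Hlt.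
    rewrite Hgrid. nra.
  - right. apply le_INR in Hge. apply (mu_nonincreasing a1 a2 t r0); auto.
    + split; [lra|]. rewrite !Hgrid. nra.
    + rewrite Hgrid. nra.
Qed.

Lemma in_Delta_multiple N : A <= INR N * r0 ->
  in_Delta a1 a2 t (N * a2) (INR N * B *
    (mu a1 a2 t (r0 - A * up_gap (INR N * ((1 - r0) / A)) / INR N) - mu a1 a2 t r0)).
Proof.
  intros HNr.
  assert (HNr' : 0 < INR N) by nra.
  assert (HN : (0 < N)%nat) by (apply INR_lt; simpl; lra).
  set (x := INR N * ((1 - r0) / A)).
  assert (Hx : 0 < x) by (apply Rmult_lt_0_compat; [|apply Rdiv_lt_0_compat]; lra).
  pose proof (up_gap_bounds x) as Hgap. unfold up_gap in Hgap.
  set (K := Z.to_nat (up x)).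
  assert (HK : INR K = IZR (up x)).
  { unfold K. rewrite INR_IZR_INZ, Z2Nat.id; auto. apply le_IZR. simpl. lra. }
  assert (HrK : 1 - A * INR K / INR N = r0 - A * up_gap x / INR N).
  { unfold up_gap. rewrite HK. unfold x. field. lra. }
  assert (HKa : (K * a1 <= N)%nat).
  { apply INR_le. rewrite mult_INR, HK.
    assert (x * A = INR N * (1 - r0)) by (unfold x; field; lra). nra. }
  assert (HrK0 : 0 <= 1 - A * INR K / INR N).
  { apply le_INR in HKa. rewrite mult_INR in HKa.
    apply Rmult_le_reg_r with (INR N); [lra|]. field_simplify; lra. }
  assert (HrK_r0 : 1 - A * INR K / INR N < r0).
  { rewrite HrK. assert (0 < A * up_gap x / INR N); [|lra].
    apply Rdiv_lt_0_compat; [apply Rmult_lt_0_compat|]; unfold up_gap; lra. }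
  assert (HrK_lt : mu a1 a2 t r0 < mu a1 a2 t (1 - A * INR K / INR N))
    by (apply (mu_decreasing a1 a2 t r0); auto; lra).
  rewrite <- HrK.
  exists (INR N * B * mu a1 a2 t r0), (INR N * B * mu a1 a2 t (1 - A * INR K / INR N)).
  split; [|split; [|split; [|split]]].
  - apply in_L_multiple; auto. exists 0%nat. split; [lia|].
    replace (1 - A * INR 0 / INR N) with 1 by (simpl; field; lra).
    now rewrite mu_1, mu_r0.
  - apply in_L_multiple; eauto.
  - apply Rmult_lt_compat_l; nra.
  - intros l Hl [H1 H2]. apply in_L_multiple in Hl as [k [Hk ->]]; auto.
    assert (0 < INR N * B) by nra.
    destruct (mu_grid_dichotomy N K k) as [Hmu|Hmu]; auto; [fold x; rewrite HK; lra|nra|nra].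
  - ring.
Qed.

Lemma consecutive_gap_approx P : derivable_pt_lim (mu a1 a2 t) r0 P ->
  forall eps, 0 < eps -> exists N0 : nat, forall N, (N0 <= N)%nat ->
  exists d, in_DeltaS a1 a2 t d /\
    Rabs (d + A * B * P * up_gap (INR N * ((1 - r0) / A))) <= eps.
Proof.
  intros Hder eps Heps.
  destruct (derivable_pt_lim_scaled_increment _ _ _ _ Hder A_gt0 (eps / B))
    as [N1 HN1]; [apply Rdiv_lt_0_compat; lra|].
  destruct (INR_eventually_gt (A / r0)) as [N2 HN2].
  exists (N1 + N2)%nat. intros N HN.
  set (th := up_gap (INR N * ((1 - r0) / A))).
  assert (Hth : 0 < th <= 1) by apply up_gap_bounds.
  exists (INR N * B * (mu a1 a2 t (r0 - A * th / INR N) - mu a1 a2 t r0)). split.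
  - exists (N * a2)%nat. split; [exists 0%nat, N; lia|].
    apply in_Delta_multiple.
    specialize (HN2 N ltac:(lia)).
    apply (Rmult_lt_compat_r r0) in HN2; [|lra].
    replace (A / r0 * r0) with A in HN2 by (field; lra). lra.
  - specialize (HN1 N th ltac:(lia) ltac:(lra)).
    apply (Rmult_le_compat_l B) in HN1; [|lra].
    replace (B * (eps / B)) with eps in HN1 by (field; lra).
    rewrite <- (Rabs_pos_eq B), <- Rabs_mult in HN1 by lra.
    replace (B * (INR N * (mu a1 a2 t (r0 - A * th / INR N) - mu a1 a2 t r0) + A * th * P))
      with (INR N * B * (mu a1 a2 t (r0 - A * th / INR N) - mu a1 a2 t r0) + A * B * P * th)
      in HN1 by ring.
    exact HN1.
Qed.

End ConsecutiveLengths.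

Lemma pigeonhole_nat M (f : nat -> nat) : (forall n, (n <= M)%nat -> (f n < M)%nat) ->
  exists i j, (i < j <= M)%nat /\ f i = f j.
Proof.
  intros Hf.
  assert (Hb : bFun (S M) f) by (intros n Hn; specialize (Hf n); lia).
  apply NNPP. intros Hno.
  assert (Hinj : bInjective (S M) f).
  { intros x y Hx Hy E.
    destruct (Nat.lt_trichotomy x y) as [H|[H|H]]; auto; exfalso; apply Hno;
      [exists x, y|exists y, x]; split; auto; lia. }
  destruct (proj1 (bInjective_bSurjective Hb) Hinj M) as [n [Hn Hfn]]; [lia|].
  specialize (Hf n). lia.
Qed.

Lemma dirichlet_approximation al eps : 0 < eps ->
  exists (q : nat) (p : Z), (1 <= q)%nat /\ Rabs (INR q * al - IZR p) < eps.
Proof.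
  intros Heps.
  destruct (archimed_cor1 eps Heps) as [M [HM HM0]].
  assert (HMr : 0 < INR M) by (apply lt_0_INR; lia).
  set (F n := frac_part (INR n * al)).
  assert (HF : forall n, 0 <= INR M * F n < INR M).
  { intros n. destruct (base_fp (INR n * al)). fold (F n) in *. nra. }
  assert (Hbox : forall n, (0 <= Int_part (INR M * F n) < Z.of_nat M)%Z).
  { intros n. destruct (base_Int_part (INR M * F n)). specialize (HF n). split.
    - enough (-1 < Int_part (INR M * F n))%Z by lia. apply lt_IZR. lra.
    - apply lt_IZR. rewrite <- INR_IZR_INZ. lra. }
  destruct (pigeonhole_nat M (fun n => Z.to_nat (Int_part (INR M * F n)))) as [i [j [Hij E]]].
  { intros n _. destruct (Hbox n). lia. }
  exists (j - i)%nat, (Int_part (INR j * al) - Int_part (INR i * al))%Z. split; [lia|].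
  destruct (Hbox i), (Hbox j).
  assert (Eij : Int_part (INR M * F i) = Int_part (INR M * F j)) by lia.
  destruct (base_Int_part (INR M * F i)), (base_Int_part (INR M * F j)).
  rewrite Eij in *.
  replace (INR (j - i) * al - IZR (Int_part (INR j * al) - Int_part (INR i * al)))
    with (F j - F i)
    by (unfold F, frac_part; rewrite minus_INR, minus_IZR by lia; ring).
  assert (Hclose : Rabs (INR M * F j - INR M * F i) < 1) by (apply Rabs_def1; lra).
  rewrite <- Rmult_minus_distr_l, Rabs_mult, Rabs_pos_eq in Hclose by lra.
  assert (Rabs (F j - F i) < / INR M); [|lra].
  apply (Rmult_lt_reg_l (INR M)); [lra|]. rewrite Rinv_r; lra.
Qed.

Lemma arithmetic_progression_step a e T : 0 < e -> a <= T ->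
  exists j : nat, T - e < a + INR j * e <= T.
Proof.
  intros He HaT. set (x := (T - a) / e).
  assert (Hx : 0 <= x) by (apply Rdiv_le_0_compat; lra).
  destruct (archimed x) as [H1 H2].
  assert (Hu : (0 <= up x - 1)%Z) by (enough (0 < up x)%Z by lia; apply lt_IZR; simpl; lra).
  exists (Z.to_nat (up x - 1)).
  rewrite INR_IZR_INZ, Z2Nat.id, minus_IZR by auto. simpl.
  assert (x * e = T - a) by (unfold x; field; lra).
  split; nra.
Qed.

Lemma arithmetic_progression_mod_one a e w : e <> 0 ->
  exists (j : nat) (L : Z), Rabs (a + INR j * e - IZR L - w) < Rabs e.
Proof.
  intros He. destruct (archimed (a - w)) as [H1 H2].
  destruct (Rlt_or_le 0 e) as [Hpos|Hneg].
  - destruct (arithmetic_progression_step a e (w + IZR (up (a - w))) Hpos ltac:(lra)) as [j Hj].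
    exists j, (up (a - w)). rewrite (Rabs_pos_eq e) by lra. apply Rabs_def1; lra.
  - destruct (arithmetic_progression_step (- a) (- e) (- (w + IZR (up (a - w) - 1))))
      as [j Hj]; [lra|rewrite minus_IZR; simpl; lra|].
    exists j, (up (a - w) - 1)%Z. rewrite (Rabs_left e) by lra. apply Rabs_def1; lra.
Qed.

Lemma dense_mod_one al : (forall (q : nat) (p : Z), (1 <= q)%nat -> INR q * al <> IZR p) ->
  forall w eps (N0 : nat), 0 < eps ->
  exists (N : nat) (L : Z), (N0 <= N)%nat /\ Rabs (INR N * al - IZR L - w) < eps.
Proof.
  intros Hirr w eps N0 Heps.
  destruct (dirichlet_approximation al eps Heps) as [q [p [Hq Hqp]]].
  set (e := INR q * al - IZR p) in *.
  assert (He : e <> 0) by (unfold e; intros E; apply (Hirr q p Hq); lra).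
  destruct (arithmetic_progression_mod_one (INR N0 * al) e w He) as [j [L HL]].
  exists (N0 + j * q)%nat, (L + Z.of_nat j * p)%Z. split; [lia|].
  replace (INR (N0 + j * q) * al - IZR (L + Z.of_nat j * p) - w)
    with (INR N0 * al + INR j * e - IZR L - w)
    by (unfold e; rewrite plus_INR, mult_INR, plus_IZR, mult_IZR, <- INR_IZR_INZ; ring).
  lra.
Qed.

(* Aiming at a point of [[d, 1 - d]] near [th] forces [up (N al)] to be the approximating [L]. *)
Lemma up_gap_dense al : (forall (q : nat) (p : Z), (1 <= q)%nat -> INR q * al <> IZR p) ->
  forall th eta (N0 : nat), 0 <= th <= 1 -> 0 < eta ->
  exists N : nat, (N0 <= N)%nat /\ Rabs (up_gap (INR N * al) - th) < eta.
Proof.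
  intros Hirr th eta N0 Hth Heta.
  set (d := Rmin eta (1 / 2) / 2).
  assert (Hd : 0 < d <= eta / 2 /\ d <= 1 / 4).
  { pose proof (Rmin_l eta (1 / 2)); pose proof (Rmin_r eta (1 / 2)).
    pose proof (Rmin_pos eta (1 / 2) Heta ltac:(lra)). unfold d. lra. }
  set (z := th * (1 - 2 * d) + d).
  assert (Hz : d <= z <= 1 - d /\ Rabs (z - th) <= d) by (unfold z; split; [|apply Rabs_le]; nra).
  destruct (dense_mod_one al Hirr (- z) d N0 ltac:(lra)) as [N [L [HN HL]]].
  exists N. split; auto.
  apply Rabs_def2 in HL. destruct Hz as [Hz Hzth]. apply Rabs_le_between in Hzth.
  assert (Hup : up (INR N * al) = L) by (symmetry; apply tech_up; lra).
  unfold up_gap. rewrite Hup. apply Rabs_def1; lra.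
Qed.

Lemma scaled_up_gap_dense al c y eta (N0 : nat) :
  (forall (q : nat) (p : Z), (1 <= q)%nat -> INR q * al <> IZR p) ->
  0 <= y <= c -> 0 < eta ->
  exists N : nat, (N0 <= N)%nat /\ Rabs (c * up_gap (INR N * al) - y) < eta.
Proof.
  intros Hirr Hy Heta.
  destruct (Req_dec c 0) as [->|Hc].
  - exists N0. split; auto. replace y with 0 by lra.
    rewrite Rmult_0_l, Rminus_0_r, Rabs_R0. lra.
  - destruct (up_gap_dense al Hirr (y / c) (eta / c) N0) as [N [HN Hclose]].
    + split; [apply Rdiv_le_0_compat|apply (Rmult_le_reg_r c); [|field_simplify]]; lra.
    + apply Rdiv_lt_0_compat; lra.
    + exists N. split; auto.
      replace (c * up_gap (INR N * al) - y) with (c * (up_gap (INR N * al) - y / c))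
        by (field; lra).
      rewrite Rabs_mult, Rabs_pos_eq by lra.
      apply (Rmult_lt_compat_l c) in Hclose; [|lra].
      replace (c * (eta / c)) with eta in Hclose by (field; lra). lra.
Qed.

Lemma irrational_neq_IZR x n : irrational x -> x <> IZR n.
Proof. intros Hx ->. apply Hx. exists n, 1%Z. split; [lia|]. simpl. field. Qed.

Lemma irrational_affine_multiples x (a : nat) : irrational x -> (0 < a)%nat ->
  forall (q : nat) (p : Z), (1 <= q)%nat -> INR q * ((1 - x) / INR a) <> IZR p.
Proof.
  intros Hx Ha q p Hq E. apply Hx.
  exists (Z.of_nat q - Z.of_nat a * p)%Z, (Z.of_nat q). split; [lia|].
  apply lt_0_INR in Ha. assert (0 < INR q) by (apply lt_0_INR; lia).
  rewrite minus_IZR, mult_IZR, <- !INR_IZR_INZ, <- E. field. lra.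
Qed.

Theorem proposition1 (a1 a2 : nat) (t r0 P : R) :
  (1 < a1)%nat -> (a1 < a2)%nat -> Nat.gcd a1 a2 = 1%nat ->
  1 < t ->
  is_r0 a1 a2 t r0 ->
  is_derive (mu a1 a2 t) r0 P ->
  irrational r0 ->
  forall y : R, 0 <= y <= Rabs (INR a1 * INR a2 * P) ->
  forall eps : R, 0 < eps ->
  exists d : R, in_DeltaS a1 a2 t d /\ Rabs (d - y) < eps.
Proof.
  intros Ha1 Ha2 Hg Ht [Hr0 [Hmu _]] Hder Hirr y Hy eps Heps.
  apply is_derive_Reals in Hder.
  assert (r0_in : 0 < r0 < 1).
  { pose proof (irrational_neq_IZR r0 0 Hirr); pose proof (irrational_neq_IZR r0 1 Hirr).
    simpl in *. lra. }
  assert (HAB : 0 < INR a1 * INR a2) by (apply Rmult_lt_0_compat; apply lt_0_INR; lia).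
  pose proof (mu_derive_r0_nonpos a1 a2 t r0 ltac:(lia) ltac:(lia) Ht r0_in Hmu P Hder).
  rewrite Rabs_left1 in Hy by (apply Rmult_le_0_l; lra).
  destruct (consecutive_gap_approx a1 a2 t r0 ltac:(lia) ltac:(lia) Hg Ht r0_in Hmu P Hder
              (eps / 2)) as [N0 HN0]; [lra|].
  destruct (scaled_up_gap_dense ((1 - r0) / INR a1) (- (INR a1 * INR a2 * P)) y (eps / 2) N0
              (irrational_affine_multiples r0 a1 Hirr ltac:(lia))) as [N [HN Hclose]]; [lra|lra|].
  destruct (HN0 N HN) as [d [Hd Hdy]].
  exists d. split; auto.
  set (th := up_gap (INR N * ((1 - r0) / INR a1))) in *.
  replace (d - y) with ((d + INR a1 * INR a2 * P * th) + (- (INR a1 * INR a2 * P) * th - y))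
    by ring.
  pose proof (Rabs_triang (d + INR a1 * INR a2 * P * th) (- (INR a1 * INR a2 * P) * th - y)).
  lra.
Qed.
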